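(* Let $\beta_1<\beta_2<\alpha_1<\alpha_2$ and $C_{\alpha_1},C_{\beta_2}>0$, $C_{\alpha_2},C_{\beta_1}<0$. The labeled orthotoric quadrilateral with normals $u_{\alpha_i}=C_{\alpha_i}(\alpha_i,-1)$, $u_{\beta_i}=C_{\beta_i}(\beta_i,-1)$ is a rational labeled polytope (i.e. its four normals lie in a common lattice of $\mathbb R^2$) if and only if (1) $\mathbf r=\frac{(\beta_2-\alpha_1)(\alpha_2-\beta_1)}{(\beta_2-\beta_1)(\alpha_2-\alpha_1)}\in\mathbb Q$, and (2) there exist positive rational numbers $p_{\beta_1},p_{\alpha_2},p_{\alpha_1}$ with $p_{\beta_1}C_{\beta_1}=\frac{\beta_2-\alpha_1}{\alpha_1-\beta_1}C_{\beta_2}$, $p_{\alpha_2}C_{\alpha_2}=-\frac{\beta_2-\beta_1}{\alpha_2-\beta_1}C_{\beta_2}$ and $p_{\alpha_1}C_{\alpha_1}=\frac{\beta_2-\beta_1}{\alpha_1-\beta_1}C_{\beta_2}$. In particular the underlying polytope $\sigma([\alpha_1,\alpha_2]\times[\beta_1,\beta_2])$ ($\sigma(x,y)=(x+y,xy)$) is of rational type iff $\mathbf r\in\mathbb Q$.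
   Context: A polytope is of rational type if there is a lattice containing a normal vector to each facet. *)

From Stdlib Require Import Reals QArith Qreals ZArith List.
Import ListNotations.
Open Scope R_scope.

Definition vec2 := (R * R)%type.

Definition is_rational (x : R) : Prop := exists q : Q, x = Q2R q.

(* (e1, e2) is a basis of R^2, so Z e1 + Z e2 is a lattice of R^2
   (every lattice of R^2 is of this form). *)
Definition is_basis (e1 e2 : vec2) : Prop :=
  fst e1 * snd e2 - snd e1 * fst e2 <> 0.

Definition in_lattice (e1 e2 v : vec2) : Prop :=
  exists a b : Z,
    fst v = IZR a * fst e1 + IZR b * fst e2 /\
    snd v = IZR a * snd e1 + IZR b * snd e2.

Definition in_common_lattice (vs : list vec2) : Prop :=
  exists e1 e2 : vec2, is_basis e1 e2 /\ Forall (in_lattice e1 e2) vs.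

Definition ortho_normal (C a : R) : vec2 := (C * a, - C).

Definition rational_labeled (a1 a2 b1 b2 Ca1 Ca2 Cb1 Cb2 : R) : Prop :=
  in_common_lattice
    [ortho_normal Ca1 a1; ortho_normal Ca2 a2;
     ortho_normal Cb1 b1; ortho_normal Cb2 b2].

(* The facets of this
   quadrilateral have normal directions (a_i,-1), (b_i,-1), so the normal
   vectors to the facets are exactly the nonzero multiples c (a_i,-1),
   c (b_i,-1). *)
Definition rational_type (a1 a2 b1 b2 : R) : Prop :=
  exists c1 c2 c3 c4 : R,
    c1 <> 0 /\ c2 <> 0 /\ c3 <> 0 /\ c4 <> 0 /\
    in_common_lattice
      [ortho_normal c1 a1; ortho_normal c2 a2;
       ortho_normal c3 b1; ortho_normal c4 b2].

Definition r_ratio (a1 a2 b1 b2 : R) : R :=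
  ((b2 - a1) * (a2 - b1)) / ((b2 - b1) * (a2 - a1)).

(* Four vectors u, v, p, q of R^2 with det u v <> 0 lie in a common lattice
   iff p and q have rational coordinates in the basis (u, v): these
   coordinates are ratios of determinants of lattice vectors, and conversely
   a common denominator N of them makes (u/N, v/N) a suitable lattice basis.
   For orthotoric normals det (C (s,-1)) (D (t,-1)) = C D (t - s), and with
   u = u_b2, v = u_a1 the four coordinates x, y (of u_a2) and z, w (of u_b1)
   satisfy z p_b1 = -1, w = - p_a1 z, x p_a2 r = -1 and y = x (r - 1) p_a1,
   so they are rational iff r and the three weights p are.  For the rational
   type statement the constants are free: r does not depend on them, and
   choosing them so that all weights equal 1 gives the converse. *)
From Stdlib Require Import Reals QArith Qreals ZArith List Lra.
Import ListNotations.
Open Scope R_scope.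

Lemma is_rational_IZR k : is_rational (IZR k).
Proof. exists (inject_Z k); unfold Q2R; simpl; field. Qed.

Lemma Q2R_neq0_Qnot_eq0 q : Q2R q <> 0 -> ~ (q == 0)%Q.
Proof. intros Hq E; apply Hq; rewrite (Qeq_eqR _ _ E); unfold Q2R; simpl; field. Qed.

Lemma is_rational_plus x y : is_rational x -> is_rational y -> is_rational (x + y).
Proof. intros [a ->] [b ->]; exists (a + b)%Q; now rewrite Q2R_plus. Qed.

Lemma is_rational_minus x y : is_rational x -> is_rational y -> is_rational (x - y).
Proof. intros [a ->] [b ->]; exists (a - b)%Q; now rewrite Q2R_minus. Qed.

Lemma is_rational_opp x : is_rational x -> is_rational (- x).
Proof. intros [a ->]; exists (- a)%Q; now rewrite Q2R_opp. Qed.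

Lemma is_rational_mult x y : is_rational x -> is_rational y -> is_rational (x * y).
Proof. intros [a ->] [b ->]; exists (a * b)%Q; now rewrite Q2R_mult. Qed.

Lemma is_rational_div x y : is_rational x -> is_rational y -> y <> 0 -> is_rational (x / y).
Proof.
  intros [a ->] [b ->] Hb; exists (a / b)%Q.
  now rewrite Q2R_div by now apply Q2R_neq0_Qnot_eq0.
Qed.

Lemma is_rational_inv x : is_rational x -> x <> 0 -> is_rational (/ x).
Proof.
  intros Hx Hx0; replace (/ x) with (1 / x) by (field; auto).
  now apply is_rational_div; [apply is_rational_IZR|..].
Qed.

Lemma is_rational_common_denominator (xs : list R) :
  Forall is_rational xs ->
  exists d : Z, IZR d <> 0 /\ Forall (fun x => exists n : Z, x * IZR d = IZR n) xs.
Proof.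
  induction 1 as [|x xs [q ->] _ [d [Hd Hxs]]].
  - exists 1%Z; split; [apply R1_neq_R0 | constructor].
  - assert (Hq : IZR (Zpos (Qden q)) <> 0) by (apply not_0_IZR; discriminate).
    exists (Zpos (Qden q) * d)%Z; rewrite mult_IZR; split.
    + now apply Rmult_integral_contrapositive_currified.
    + constructor.
      * exists (Qnum q * d)%Z; rewrite mult_IZR; unfold Q2R; field; auto.
      * refine (Forall_impl _ _ Hxs); intros y [n Hn].
        exists (n * Zpos (Qden q))%Z; rewrite mult_IZR, <- Hn; ring.
Qed.

Definition det (p q : vec2) : R := fst p * snd q - snd p * fst q.

Lemma det_in_lattice e1 e2 p q : in_lattice e1 e2 p -> in_lattice e1 e2 q ->
  exists k : Z, det p q = IZR k * det e1 e2.
Proof.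
  unfold det; intros [a [b [-> ->]]] [c [d [-> ->]]].
  exists (a * d - b * c)%Z; rewrite minus_IZR, !mult_IZR; ring.
Qed.

Lemma is_rational_det_ratio e1 e2 p q p' q' :
  in_lattice e1 e2 p -> in_lattice e1 e2 q ->
  in_lattice e1 e2 p' -> in_lattice e1 e2 q' -> det p' q' <> 0 ->
  is_rational (det p q / det p' q').
Proof.
  intros Hp Hq Hp' Hq' Hn.
  destruct (det_in_lattice _ _ _ _ Hp Hq) as [k ->].
  destruct (det_in_lattice _ _ _ _ Hp' Hq') as [k' Hk']; rewrite Hk' in *.
  assert (IZR k' <> 0) by (intro E; apply Hn; rewrite E; ring).
  assert (det e1 e2 <> 0) by (intro E; apply Hn; rewrite E; ring).
  replace (IZR k * det e1 e2 / (IZR k' * det e1 e2)) with (IZR k / IZR k') by (field; auto).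
  apply is_rational_div; auto; apply is_rational_IZR.
Qed.

(* Cramer's rule for the coordinates of p in the basis (u, v). *)
Definition coord_fst (u v p : vec2) : R := det p v / det u v.
Definition coord_snd (u v p : vec2) : R := det u p / det u v.

Lemma coord_decomposition u v p : det u v <> 0 ->
  fst p = coord_fst u v p * fst u + coord_snd u v p * fst v /\
  snd p = coord_fst u v p * snd u + coord_snd u v p * snd v.
Proof. unfold coord_fst, coord_snd, det; intros; split; field; auto. Qed.

Definition scale_vec (c : R) (e : vec2) : vec2 := (c * fst e, c * snd e).

Lemma in_lattice_scaled_basis u v p x y (d n m : Z) :
  IZR d <> 0 -> x * IZR d = IZR n -> y * IZR d = IZR m ->
  fst p = x * fst u + y * fst v -> snd p = x * snd u + y * snd v ->
  in_lattice (scale_vec (/ IZR d) u) (scale_vec (/ IZR d) v) p.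
Proof.
  intros Hd Hn Hm Ep1 Ep2; exists n, m; unfold scale_vec; simpl.
  rewrite Ep1, Ep2, <- Hn, <- Hm; split; field; auto.
Qed.

Lemma in_common_lattice_iff_rational_coords u v p q : det u v <> 0 ->
  in_common_lattice [v; p; q; u] <->
  is_rational (coord_fst u v p) /\ is_rational (coord_snd u v p) /\
  is_rational (coord_fst u v q) /\ is_rational (coord_snd u v q).
Proof.
  intros Huv; split.
  - intros [e1 [e2 [_ Hvs]]].
    inversion_clear Hvs as [|? ? Lv Hvs1]; inversion_clear Hvs1 as [|? ? Lp Hvs2].
    inversion_clear Hvs2 as [|? ? Lq Hvs3]; inversion_clear Hvs3 as [|? ? Lu _].
    unfold coord_fst, coord_snd; repeat split; apply (is_rational_det_ratio e1 e2); auto.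
  - intros (Hx & Hy & Hz & Hw).
    destruct (is_rational_common_denominator [coord_fst u v p; coord_snd u v p;
                coord_fst u v q; coord_snd u v q]) as [d [Hd Hds]];
      [repeat constructor; auto|].
    inversion_clear Hds as [|? ? [nx Nx] Hds1]; inversion_clear Hds1 as [|? ? [ny Ny] Hds2].
    inversion_clear Hds2 as [|? ? [nz Nz] Hds3]; inversion_clear Hds3 as [|? ? [nw Nw] _].
    destruct (coord_decomposition u v p Huv) as [Ep1 Ep2].
    destruct (coord_decomposition u v q Huv) as [Eq1 Eq2].
    exists (scale_vec (/ IZR d) u), (scale_vec (/ IZR d) v); split.
    + intro E; apply Huv; unfold scale_vec, det in *; simpl in E.
      replace (fst u * snd v - snd u * fst v)
        with ((/ IZR d * fst u * (/ IZR d * snd v) - / IZR d * snd u * (/ IZR d * fst v))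
              * (IZR d * IZR d)) by (field; auto).
      rewrite E; ring.
    + repeat constructor.
      * apply (in_lattice_scaled_basis _ _ _ 0 1 d 0 d); auto; simpl; ring.
      * eapply (in_lattice_scaled_basis _ _ _ _ _ d nx ny); eauto.
      * eapply (in_lattice_scaled_basis _ _ _ _ _ d nz nw); eauto.
      * apply (in_lattice_scaled_basis _ _ _ 1 0 d d 0); auto; simpl; ring.
Qed.

Lemma rational_coords_iff_rational_weights (x y z w r p1 p2 p3 : R) :
  p3 <> 0 -> z * p1 = -1 -> w = - p3 * z -> x * p2 * r = -1 -> y = x * (r - 1) * p3 ->
  (is_rational x /\ is_rational y /\ is_rational z /\ is_rational w) <->
  (is_rational r /\ is_rational p1 /\ is_rational p2 /\ is_rational p3).
Proof.
  intros Hp3 Ez Ew Ex Ey.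
  assert (Hz : z <> 0) by (intro E; rewrite E in Ez; lra).
  assert (Hp1 : p1 <> 0) by (intro E; rewrite E in Ez; lra).
  assert (Hx : x <> 0) by (intro E; rewrite E in Ex; lra).
  assert (Hr : r <> 0) by (intro E; rewrite E in Ex; lra).
  assert (Hp2 : p2 <> 0) by (intro E; rewrite E in Ex; lra).
  assert (Rone := is_rational_IZR 1).
  split.
  - intros (Qx & Qy & Qz & Qw).
    assert (Qp3 : is_rational p3).
    { replace p3 with (- (w / z)) by (subst w; field; auto).
      now apply is_rational_opp, is_rational_div. }
    assert (Qr : is_rational r).
    { replace r with (1 + y / (x * p3)) by (subst y; field; auto).
      apply is_rational_plus; [exact Rone|].
      apply is_rational_div; [exact Qy | now apply is_rational_mult |].
      now apply Rmult_integral_contrapositive_currified. }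
    repeat split; auto.
    + replace p1 with (- / z) by (field_simplify_eq; lra).
      now apply is_rational_opp, is_rational_inv.
    + replace p2 with (- / (x * r)) by (field_simplify_eq; auto; lra).
      apply is_rational_opp, is_rational_inv.
      * now apply is_rational_mult.
      * now apply Rmult_integral_contrapositive_currified.
  - intros (Qr & Qp1 & Qp2 & Qp3).
    assert (Qx : is_rational x).
    { replace x with (- / (p2 * r)) by (field_simplify_eq; auto; lra).
      apply is_rational_opp, is_rational_inv.
      * now apply is_rational_mult.
      * now apply Rmult_integral_contrapositive_currified. }
    assert (Qz : is_rational z).
    { replace z with (- / p1) by (field_simplify_eq; lra).
      now apply is_rational_opp, is_rational_inv. }
    repeat split; auto.
    + subst y; repeat apply is_rational_mult; auto; now apply is_rational_minus.
    + subst w; now apply is_rational_mult; [apply is_rational_opp|].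
Qed.

Lemma det_ortho_normal C t D s : det (ortho_normal C t) (ortho_normal D s) = C * D * (s - t).
Proof. unfold det, ortho_normal; simpl; ring. Qed.

Section Orthotoric.

Variables a1 a2 b1 b2 Ca1 Ca2 Cb1 Cb2 : R.
Hypotheses (Hb : b1 < b2) (Hba : b2 < a1) (Ha : a1 < a2).
Hypotheses (Ca1_neq0 : Ca1 <> 0) (Ca2_neq0 : Ca2 <> 0)
           (Cb1_neq0 : Cb1 <> 0) (Cb2_neq0 : Cb2 <> 0).

Definition weight_b1 : R := (b2 - a1) / (a1 - b1) * Cb2 / Cb1.
Definition weight_a2 : R := - ((b2 - b1) / (a2 - b1)) * Cb2 / Ca2.
Definition weight_a1 : R := (b2 - b1) / (a1 - b1) * Cb2 / Ca1.

Let ua1 := ortho_normal Ca1 a1.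
Let ua2 := ortho_normal Ca2 a2.
Let ub1 := ortho_normal Cb1 b1.
Let ub2 := ortho_normal Cb2 b2.

Lemma rational_labeled_iff_rational_weights :
  rational_labeled a1 a2 b1 b2 Ca1 Ca2 Cb1 Cb2 <->
  is_rational (r_ratio a1 a2 b1 b2) /\
  is_rational weight_b1 /\ is_rational weight_a2 /\ is_rational weight_a1.
Proof.
  assert (D : det ub2 ua1 <> 0).
  { unfold ub2, ua1; rewrite det_ortho_normal.
    repeat apply Rmult_integral_contrapositive_currified; auto; lra. }
  assert (W : weight_a1 <> 0).
  { unfold weight_a1, Rdiv.
    repeat (apply Rmult_integral_contrapositive_currified || apply Rinv_neq_0_compat);
      auto; lra. }
  unfold rational_labeled; fold ua1 ua2 ub1 ub2.
  rewrite in_common_lattice_iff_rational_coords by exact D.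
  apply rational_coords_iff_rational_weights; [exact W|..];
    unfold coord_fst, coord_snd, ua1, ua2, ub1, ub2, weight_b1, weight_a2, weight_a1, r_ratio;
    rewrite ?det_ortho_normal; field; repeat split; auto; lra.
Qed.

Lemma exists_weights_iff_rational_weights :
  0 < weight_b1 -> 0 < weight_a2 -> 0 < weight_a1 ->
  (exists pb1 pa2 pa1 : R,
      0 < pb1 /\ is_rational pb1 /\
      0 < pa2 /\ is_rational pa2 /\
      0 < pa1 /\ is_rational pa1 /\
      pb1 * Cb1 = (b2 - a1) / (a1 - b1) * Cb2 /\
      pa2 * Ca2 = - ((b2 - b1) / (a2 - b1)) * Cb2 /\
      pa1 * Ca1 = (b2 - b1) / (a1 - b1) * Cb2) <->
  is_rational weight_b1 /\ is_rational weight_a2 /\ is_rational weight_a1.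
Proof.
  unfold weight_b1, weight_a2, weight_a1; intros P1 P2 P3; split.
  - intros (pb1 & pa2 & pa1 & _ & Q1 & _ & Q2 & _ & Q3 & <- & <- & <-).
    repeat split; match goal with
                  | |- is_rational (?p * ?C / ?C) =>
                      replace (p * C / C) with p by (field; auto); assumption
                  end.
  - intros (Q1 & Q2 & Q3).
    exists ((b2 - a1) / (a1 - b1) * Cb2 / Cb1), (- ((b2 - b1) / (a2 - b1)) * Cb2 / Ca2),
           ((b2 - b1) / (a1 - b1) * Cb2 / Ca1).
    repeat split; auto; field; split; auto; lra.
Qed.

End Orthotoric.

Lemma orthotoric_weights_pos a1 a2 b1 b2 Ca1 Ca2 Cb1 Cb2 :
  b1 < b2 -> b2 < a1 -> a1 < a2 ->
  0 < Ca1 -> 0 < Cb2 -> Ca2 < 0 -> Cb1 < 0 ->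
  0 < weight_a1 a1 b1 b2 Ca1 Cb2 /\ 0 < weight_a2 a2 b1 b2 Ca2 Cb2 /\
  0 < weight_b1 a1 b1 b2 Cb1 Cb2.
Proof.
  intros; unfold weight_a1, weight_a2, weight_b1; repeat split.
  - replace ((b2 - b1) / (a1 - b1) * Cb2 / Ca1)
      with ((b2 - b1) * Cb2 / ((a1 - b1) * Ca1)) by (field; split; lra).
    apply Rdiv_lt_0_compat; apply Rmult_lt_0_compat; lra.
  - replace (- ((b2 - b1) / (a2 - b1)) * Cb2 / Ca2)
      with ((b2 - b1) * Cb2 / ((a2 - b1) * - Ca2)) by (field; split; lra).
    apply Rdiv_lt_0_compat; apply Rmult_lt_0_compat; lra.
  - replace ((b2 - a1) / (a1 - b1) * Cb2 / Cb1)
      with ((a1 - b2) * Cb2 / ((a1 - b1) * - Cb1)) by (field; split; lra).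
    apply Rdiv_lt_0_compat; apply Rmult_lt_0_compat; lra.
Qed.

Theorem mainTheorem14 (a1 a2 b1 b2 Ca1 Ca2 Cb1 Cb2 : R) :
  b1 < b2 -> b2 < a1 -> a1 < a2 ->
  0 < Ca1 -> 0 < Cb2 -> Ca2 < 0 -> Cb1 < 0 ->
  (rational_labeled a1 a2 b1 b2 Ca1 Ca2 Cb1 Cb2 <->
     (is_rational (r_ratio a1 a2 b1 b2) /\
      exists pb1 pa2 pa1 : R,
        0 < pb1 /\ is_rational pb1 /\
        0 < pa2 /\ is_rational pa2 /\
        0 < pa1 /\ is_rational pa1 /\
        pb1 * Cb1 = (b2 - a1) / (a1 - b1) * Cb2 /\
        pa2 * Ca2 = - ((b2 - b1) / (a2 - b1)) * Cb2 /\
        pa1 * Ca1 = (b2 - b1) / (a1 - b1) * Cb2))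
  /\
  (rational_type a1 a2 b1 b2 <-> is_rational (r_ratio a1 a2 b1 b2)).
Proof.
  intros Hb Hba Ha Ca1_pos Cb2_pos Ca2_neg Cb1_neg; split; [|split].
  - destruct (orthotoric_weights_pos a1 a2 b1 b2 Ca1 Ca2 Cb1 Cb2) as (P1 & P2 & P3); auto.
    rewrite (rational_labeled_iff_rational_weights a1 a2 b1 b2 Ca1 Ca2 Cb1 Cb2) by lra.
    rewrite (exists_weights_iff_rational_weights a1 a2 b1 b2 Ca1 Ca2 Cb1 Cb2) by lra.
    tauto.
  - intros (c1 & c2 & c3 & c4 & ? & ? & ? & ? & Hlattice).
    now apply (rational_labeled_iff_rational_weights a1 a2 b1 b2 c1 c2 c3 c4).
  - intros Hr.
    set (ca1 := (b2 - b1) / (a1 - b1)).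
    set (ca2 := - ((b2 - b1) / (a2 - b1))).
    set (cb1 := (b2 - a1) / (a1 - b1)).
    (* With these constants and C_b2 = 1 all three weights equal 1. *)
    assert (Hca1 : ca1 <> 0) by (unfold ca1, Rdiv; apply Rmult_integral_contrapositive_currified;
                                  [|apply Rinv_neq_0_compat]; lra).
    assert (Hca2 : ca2 <> 0) by (unfold ca2, Rdiv; apply Ropp_neq_0_compat, Rmult_integral_contrapositive_currified;
                                  [|apply Rinv_neq_0_compat]; lra).
    assert (Hcb1 : cb1 <> 0) by (unfold cb1, Rdiv; apply Rmult_integral_contrapositive_currified;
                                  [|apply Rinv_neq_0_compat]; lra).
    exists ca1, ca2, cb1, 1; repeat split; auto; try lra.
    apply (rational_labeled_iff_rational_weights a1 a2 b1 b2); auto; try lra.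
    unfold weight_b1, weight_a2, weight_a1; fold ca1 ca2 cb1.
    rewrite !Rmult_1_r, !Rdiv_diag by assumption.
    repeat split; auto; apply is_rational_IZR.
Qed.
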